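(* Let $G$ be an amenable (discrete) group, let $(X,u)$ and $(Y,v)$ be $G$-spaces with $X$ $G$-complemented in its bidual, and let $\Omega:Y\curvearrowright X$ be a quasi-linear map between them. Assume that for every $g\in G$ there is a linear map $L_g:Y_{00}\to X_\infty$ such that $T_g=\begin{pmatrix}u(g)&L_g\\0&v(g)\end{pmatrix}$, i.e. $T_g(x,y)=(u(g)x+L_gy,v(g)y)$, is a bounded invertible operator on $X\oplus_\Omega Y$, with $\sup_{g\in G}\|T_g\|\|T_g^{-1}\|<\infty$. Then the action of $G$ is compatible with $\Omega$, and the associated derivation $g\mapsto d(g)$ can be chosen so that $d(g)-L_g$ maps $Y_{00}$ into $X$ with $\sup_{g}\sup_{y\in Y_{00},\|y\|\le1}\|d(g)y-L_gy\|_X<\infty$.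
   Context: $G$-space: Banach space with bounded action $g\mapsto u(g)$. A quasi-linear map $\Omega:Y\curvearrowright X$ between $G$-spaces $(Y,v),(X,u)$ is a homogeneous map $\Omega:Y_{00}\to X_\infty$, with $Y_{00}\subseteq Y$ dense and $v(G)$-invariant, $X_\infty\supseteq X$ a vector space to which $u$ extends linearly, and $\|\Omega(y+y')-\Omega y-\Omega y'\|_X\le C(\|y\|+\|y'\|)$. $X\oplus_\Omega Y$ is the completion of $\{(x,y)\in X_\infty\times Y_{00}:x-\Omega y\in X\}$ under $\|x-\Omega y\|_X+\|y\|_Y$. A derivation is a map $g\mapsto d(g)$, $d(g):Y_{00}\to X_\infty$ linear, with $d(gh)=u(g)d(h)+d(g)v(h)$. The action is compatible with $\Omega$ if there is a derivation $d$ and $C$ with $\|u(g)\Omega y-\Omega v(g)y+d(g)y\|_X\le C\|y\|_Y$ for all $g,y$; equivalently $g\mapsto\begin{pmatrix}u(g)&d(g)\\0&v(g)\end{pmatrix}$ is a bounded representation on $X\oplus_\Omega Y$. $X$ is $G$-complemented in its bidual if there is a bounded projection $P:X^{**}\to X$ with $Pu(g)^{**}=u(g)P$. *)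

From Stdlib Require Export Reals.
Open Scope R_scope.

Record VSpace := {
  vcar :> Type;
  vzero : vcar;
  vadd : vcar -> vcar -> vcar;
  vopp : vcar -> vcar;
  vscal : R -> vcar -> vcar;
  vadd_assoc : forall x y z, vadd x (vadd y z) = vadd (vadd x y) z;
  vadd_comm : forall x y, vadd x y = vadd y x;
  vadd_zero : forall x, vadd x vzero = x;
  vadd_opp : forall x, vadd x (vopp x) = vzero;
  vscal_one : forall x, vscal 1 x = x;
  vscal_assoc : forall a b x, vscal a (vscal b x) = vscal (a * b) x;
  vscal_distr_v : forall a x y, vscal a (vadd x y) = vadd (vscal a x) (vscal a y);
  vscal_distr_s : forall a b x, vscal (a + b) x = vadd (vscal a x) (vscal b x)
}.
Arguments vzero {_}.
Arguments vadd {_} _ _.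
Arguments vopp {_} _.
Arguments vscal {_} _ _.

Definition vsub {V : VSpace} (x y : V) : V := vadd x (vopp y).

Record NSpace := {
  nvs :> VSpace;
  norm : nvs -> R;
  norm_nonneg : forall x, 0 <= norm x;
  norm_eq0 : forall x, norm x = 0 -> x = vzero;
  norm_triangle : forall x y, norm (vadd x y) <= norm x + norm y;
  norm_scal : forall a x, norm (vscal a x) = Rabs a * norm x
}.
Arguments norm {_} _.

Definition complete (X : NSpace) : Prop :=
  forall s : nat -> X,
    (forall eps, 0 < eps -> exists N, forall m n, (N <= m)%nat -> (N <= n)%nat ->
        norm (vsub (s m) (s n)) < eps) ->
    exists l : X, forall eps, 0 < eps -> exists N, forall n, (N <= n)%nat ->
        norm (vsub (s n) l) < eps.

Definition banach (X : NSpace) : Prop := complete X.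

Definition is_linmap {V W : VSpace} (f : V -> W) : Prop :=
  (forall x y, f (vadd x y) = vadd (f x) (f y)) /\
  (forall a x, f (vscal a x) = vscal a (f x)).

Definition is_linmap_on {V W : VSpace} (P : V -> Prop) (f : V -> W) : Prop :=
  (forall x y, P x -> P y -> f (vadd x y) = vadd (f x) (f y)) /\
  (forall a x, P x -> f (vscal a x) = vscal a (f x)).

Definition is_linfun {V : VSpace} (f : V -> R) : Prop :=
  (forall x y, f (vadd x y) = f x + f y) /\ (forall a x, f (vscal a x) = a * f x).

Record Group := {
  gcar :> Type;
  gmul : gcar -> gcar -> gcar;
  ginv : gcar -> gcar;
  gone : gcar;
  gmul_assoc : forall a b c, gmul a (gmul b c) = gmul (gmul a b) c;
  gmul_one_l : forall a, gmul gone a = a;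
  gmul_one_r : forall a, gmul a gone = a;
  gmul_inv_l : forall a, gmul (ginv a) a = gone;
  gmul_inv_r : forall a, gmul a (ginv a) = gone
}.
Arguments gmul {_} _ _.
Arguments ginv {_} _.
Arguments gone {_}.

Definition bounded_fun {G : Group} (f : G -> R) : Prop := exists M, forall g, Rabs (f g) <= M.

Definition amenable (G : Group) : Prop :=
  exists m : (G -> R) -> R,
    (forall f1 f2, bounded_fun f1 -> bounded_fun f2 ->
        m (fun g => f1 g + f2 g) = m f1 + m f2) /\
    (forall a f, bounded_fun f -> m (fun g => a * f g) = a * m f) /\
    (forall f, bounded_fun f -> (forall g, 0 <= f g) -> 0 <= m f) /\
    m (fun _ => 1) = 1 /\
    (forall f h, bounded_fun f -> m (fun g => f (gmul h g)) = m f).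

Definition is_action {G : Group} {V : VSpace} (w : G -> V -> V) : Prop :=
  (forall g, is_linmap (w g)) /\
  (forall g h x, w (gmul g h) x = w g (w h x)) /\
  (forall x, w gone x = x).

Definition Gspace {G : Group} (X : NSpace) (u : G -> X -> X) : Prop :=
  banach X /\ is_action u /\ exists M, forall g x, norm (u g x) <= M * norm x.

Definition fbounded {X : NSpace} (f : X -> R) (M : R) : Prop :=
  forall x, Rabs (f x) <= M * norm x.

Definition Dual (X : NSpace) : Type :=
  { f : X -> R | is_linfun f /\ exists M, fbounded f M }.

(* Phi : Dual X -> R is an element of X** : linear and bounded
   (|Phi f| <= C ||f|| expressed without naming the operator norm) *)
Definition is_bidual {X : NSpace} (Phi : Dual X -> R) : Prop :=
  (forall f1 f2 f3 : Dual X,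
      (forall x, proj1_sig f3 x = proj1_sig f1 x + proj1_sig f2 x) ->
      Phi f3 = Phi f1 + Phi f2) /\
  (forall a (f1 f2 : Dual X), (forall x, proj1_sig f2 x = a * proj1_sig f1 x) ->
      Phi f2 = a * Phi f1) /\
  (exists C, forall (f : Dual X) M, fbounded (proj1_sig f) M -> Rabs (Phi f) <= C * M).

Definition bidual_norm_le {X : NSpace} (Phi : Dual X -> R) (K : R) : Prop :=
  forall (f : Dual X) M, fbounded (proj1_sig f) M -> Rabs (Phi f) <= K * M.

(* X is G-complemented in its bidual: bounded projection P : X** -> X
   (P o J = id, J the canonical embedding) with P u(g)** = u(g) P. *)
Definition G_complemented_in_bidual {G : Group} (X : NSpace) (u : G -> X -> X) : Prop :=
  exists P : (Dual X -> R) -> X,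
    (forall Phi1 Phi2 Phi3, is_bidual Phi1 -> is_bidual Phi2 -> is_bidual Phi3 ->
        (forall f, Phi3 f = Phi1 f + Phi2 f) -> P Phi3 = vadd (P Phi1) (P Phi2)) /\
    (forall a Phi1 Phi2, is_bidual Phi1 -> is_bidual Phi2 ->
        (forall f, Phi2 f = a * Phi1 f) -> P Phi2 = vscal a (P Phi1)) /\
    (exists C, forall Phi K, is_bidual Phi -> bidual_norm_le Phi K -> norm (P Phi) <= C * K) /\
    (forall x : X, P (fun f => proj1_sig f x) = x) /\
    (forall g Phi Phi', is_bidual Phi -> is_bidual Phi' ->
        (* Phi' = u(g)** Phi, i.e. Phi' f = Phi (f o u(g)) *)
        (forall f f' : Dual X, (forall x, proj1_sig f' x = proj1_sig f (u g x)) -> Phi' f = Phi f') ->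
        P Phi' = u g (P Phi)).

Definition inX_le {X : NSpace} {Xinf : VSpace} (iota : X -> Xinf) (z : Xinf) (K : R) : Prop :=
  exists x : X, iota x = z /\ norm x <= K.

Definition inX {X : NSpace} {Xinf : VSpace} (iota : X -> Xinf) (z : Xinf) : Prop :=
  exists x : X, iota x = z.

Definition subspace {V : VSpace} (P : V -> Prop) : Prop :=
  P vzero /\ (forall x y, P x -> P y -> P (vadd x y)) /\ (forall a x, P x -> P (vscal a x)).

Definition dense {Y : NSpace} (P : Y -> Prop) : Prop :=
  forall y eps, 0 < eps -> exists y0, P y0 /\ norm (vsub y y0) < eps.

(* The data (Y00, X_oo, iota, uinf) of the context:
   Y00 dense v(G)-invariant subspace of Y; X_oo a vector space containing X
   (via the injective linear map iota), to which the action u extends linearly (uinf). *)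
Definition QL_setting {G : Group} (X Y : NSpace) (u : G -> X -> X) (v : G -> Y -> Y)
    (Y00 : Y -> Prop) (Xinf : VSpace) (iota : X -> Xinf) (uinf : G -> Xinf -> Xinf) : Prop :=
  subspace Y00 /\ dense Y00 /\ (forall g y, Y00 y -> Y00 (v g y)) /\
  is_linmap iota /\ (forall x1 x2, iota x1 = iota x2 -> x1 = x2) /\
  is_action uinf /\ (forall g x, uinf g (iota x) = iota (u g x)).

Definition quasi_linear {X Y : NSpace} {Xinf : VSpace} (Y00 : Y -> Prop)
    (iota : X -> Xinf) (Omega : Y -> Xinf) : Prop :=
  (forall a y, Y00 y -> Omega (vscal a y) = vscal a (Omega y)) /\
  exists C, forall y y', Y00 y -> Y00 y' ->
    inX_le iota (vsub (Omega (vadd y y')) (vadd (Omega y) (Omega y'))) (C * (norm y + norm y')).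

(* dense part D = {(z,y) in X_oo x Y00 : z - Omega y in X}; its quasi-norm
   ||z - Omega y|| + ||y||; X (+)_Omega Y is its completion. *)
Definition inD {X Y : NSpace} {Xinf : VSpace} (Y00 : Y -> Prop) (iota : X -> Xinf)
    (Omega : Y -> Xinf) (z : Xinf) (y : Y) : Prop :=
  Y00 y /\ inX iota (vsub z (Omega y)).

Definition qnorm_is {X Y : NSpace} {Xinf : VSpace} (Y00 : Y -> Prop) (iota : X -> Xinf)
    (Omega : Y -> Xinf) (z : Xinf) (y : Y) (q : R) : Prop :=
  Y00 y /\ exists x : X, iota x = vsub z (Omega y) /\ q = norm x + norm y.

(* The operator T(z,y) = (uinf g z + L y, v g y), given on D, extends to a bounded
   invertible operator of the completion X (+)_Omega Y with ||T|| <= a, ||T^-1|| <= b.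
   Since D is dense, this holds iff T maps D into D, ||T w|| <= a ||w||,
   ||w|| <= b ||T w||, and T(D) is dense in D. *)
Definition twisted_bdd_invertible {G : Group} {X Y : NSpace} {Xinf : VSpace}
    (Y00 : Y -> Prop) (iota : X -> Xinf) (Omega : Y -> Xinf)
    (uinf : G -> Xinf -> Xinf) (v : G -> Y -> Y) (g : G) (L : Y -> Xinf) (a b : R) : Prop :=
  let T1 := fun z y => vadd (uinf g z) (L y) in
  let T2 := fun (y : Y) => v g y in
  (forall z y, inD Y00 iota Omega z y -> inD Y00 iota Omega (T1 z y) (T2 y)) /\
  (forall z y q q', qnorm_is Y00 iota Omega z y q ->
      qnorm_is Y00 iota Omega (T1 z y) (T2 y) q' -> q' <= a * q /\ q <= b * q') /\
  (forall z y eps, inD Y00 iota Omega z y -> 0 < eps ->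
      exists z0 y0, inD Y00 iota Omega z0 y0 /\
        exists q, qnorm_is Y00 iota Omega (vsub z (T1 z0 y0)) (vsub y (T2 y0)) q /\ q < eps).

Definition derivation {G : Group} {Y : NSpace} {Xinf : VSpace} (Y00 : Y -> Prop)
    (uinf : G -> Xinf -> Xinf) (v : G -> Y -> Y) (d : G -> Y -> Xinf) : Prop :=
  (forall g, is_linmap_on Y00 (d g)) /\
  (forall g h y, Y00 y -> d (gmul g h) y = vadd (uinf g (d h y)) (d g (v h y))).

Definition compatible_via {G : Group} {X Y : NSpace} {Xinf : VSpace} (Y00 : Y -> Prop)
    (iota : X -> Xinf) (Omega : Y -> Xinf) (uinf : G -> Xinf -> Xinf) (v : G -> Y -> Y)
    (d : G -> Y -> Xinf) : Prop :=
  derivation Y00 uinf v d /\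
  exists C, forall g y, Y00 y ->
    inX_le iota (vadd (vsub (uinf g (Omega y)) (Omega (v g y))) (d g y)) (C * norm y).

(* Since T_g maps (Omega w, w) into the twisted sum, beta_g w := u(g) Omega w + L_g w
   - Omega (v(g) w) lies in X, and testing T_g and T_g^-1 on (Omega w, w) and on X
   gives ||beta_g w|| <= K ||u|| ||w||.  The map beta is a cocycle up to the linear
   defect L_ab - u(a) L_b - L_a v(b).  Averaging A w := m_k [u(k) beta_{k^-1} w] with an
   invariant mean, made X-valued and equivariant by the projection X** -> X, gives a
   map Omega' = Omega - A at bounded distance from Omega, and
   d(g) := Omega' v(g) - u(g) Omega' is the required derivation: it is a coboundary,
   so it satisfies the derivation identity; d(g) - L_g = u(g) A - A v(g) - beta_g is
   bounded; and d(g) = -(u(g) L_{g^-1} v(g) + Psi_g) with Psi_g an average of the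
   linear defects, so d(g) is linear although Omega' is not. *)

From Stdlib Require Import Reals Lra ZArith List.
From Stdlib Require Import Classical FunctionalExtensionality ClassicalEpsilon.
Open Scope R_scope.

Arguments vadd_assoc {_} _ _ _.
Arguments vadd_comm {_} _ _.
Arguments vadd_zero {_} _.
Arguments vadd_opp {_} _.
Arguments vscal_one {_} _.
Arguments vscal_assoc {_} _ _ _.
Arguments vscal_distr_v {_} _ _ _.
Arguments vscal_distr_s {_} _ _ _.
Arguments norm_nonneg {_} _.
Arguments norm_eq0 {_} _ _.
Arguments norm_triangle {_} _ _.
Arguments norm_scal {_} _ _.

Section VectorAlgebra.

Context {V : VSpace}.

Lemma vadd0l (x : V) : vadd vzero x = x.
Proof. rewrite vadd_comm; apply vadd_zero. Qed.

Lemma vscal0l (x : V) : vscal 0 x = vzero.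
Proof.
  assert (H : vscal 0 x = vadd (vscal 0 x) (vscal 0 x)).
  { rewrite <- vscal_distr_s. f_equal. ring. }
  apply (f_equal (fun z => vadd z (vopp (vscal 0 x)))) in H.
  rewrite vadd_opp, <- vadd_assoc, vadd_opp, vadd_zero in H. symmetry; exact H.
Qed.

Lemma vopp_unique (x y : V) : vadd x y = vzero -> y = vopp x.
Proof.
  intro H. rewrite <- (vadd0l y), <- (vadd_opp x), (vadd_comm x), <- vadd_assoc, H, vadd_zero.
  reflexivity.
Qed.

Lemma vscalNl (r : R) (x : V) : vscal (- r) x = vopp (vscal r x).
Proof.
  apply vopp_unique. rewrite <- vscal_distr_s. replace (r + - r) with 0 by ring. apply vscal0l.
Qed.

Lemma vsub_eq0 (x y : V) : vsub x y = vzero -> x = y.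
Proof.
  unfold vsub; intro H.
  rewrite <- (vadd_zero x), <- (vadd_opp y), (vadd_comm y), vadd_assoc, H, vadd0l.
  reflexivity.
Qed.

End VectorAlgebra.

(* Equalities in the abelian group [(V, vadd)] are decided by reflection: a term
   is sent to its vector of integer coefficients over the atoms occurring in it. *)
Inductive vterm :=
  VVar (n : nat) | VZero | VAdd (s t : vterm) | VOpp (t : vterm) | VSub (s t : vterm).

Fixpoint veval (V : VSpace) (env : list V) (t : vterm) : V :=
  match t with
  | VVar n => nth n env vzero
  | VZero => vzero
  | VAdd s t => vadd (veval V env s) (veval V env t)
  | VOpp t => vopp (veval V env t)
  | VSub s t => vsub (veval V env s) (veval V env t)
  end.

Fixpoint zadd (l1 l2 : list Z) : list Z :=
  match l1, l2 with
  | nil, _ => l2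
  | _, nil => l1
  | a :: l1', b :: l2' => (a + b)%Z :: zadd l1' l2'
  end.

Definition zopp (l : list Z) : list Z := map Z.opp l.

Fixpoint zunit (n : nat) : list Z :=
  match n with O => 1%Z :: nil | S n => 0%Z :: zunit n end.

Fixpoint vcoeffs (t : vterm) : list Z :=
  match t with
  | VVar n => zunit n
  | VZero => nil
  | VAdd s t => zadd (vcoeffs s) (vcoeffs t)
  | VOpp t => zopp (vcoeffs t)
  | VSub s t => zadd (vcoeffs s) (zopp (vcoeffs t))
  end.

Fixpoint vcomb (V : VSpace) (env : list V) (l : list Z) : V :=
  match env with
  | nil => vzero
  | x :: env' => vadd (vscal (IZR (hd 0%Z l)) x) (vcomb V env' (tl l))
  end.

Lemma vcomb_zadd V env : forall l1 l2,
  vcomb V env (zadd l1 l2) = vadd (vcomb V env l1) (vcomb V env l2).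
Proof.
  induction env as [|x env IH]; intros l1 l2; simpl.
  - symmetry; apply vadd_zero.
  - assert (Hhd : hd 0%Z (zadd l1 l2) = (hd 0%Z l1 + hd 0%Z l2)%Z)
      by (destruct l1, l2; simpl; ring).
    assert (Htl : tl (zadd l1 l2) = zadd (tl l1) (tl l2))
      by (destruct l1 as [|? []], l2; reflexivity).
    rewrite Hhd, Htl, IH, plus_IZR, vscal_distr_s.
    rewrite <- !vadd_assoc. f_equal. rewrite !vadd_assoc. f_equal. apply vadd_comm.
Qed.

Lemma vcomb_zopp V env : forall l, vcomb V env (zopp l) = vopp (vcomb V env l).
Proof.
  induction env as [|x env IH]; intros l; simpl.
  - apply vopp_unique, vadd_zero.
  - replace (hd 0%Z (zopp l)) with (- hd 0%Z l)%Z by (destruct l; simpl; ring).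
    replace (tl (zopp l)) with (zopp (tl l)) by (destruct l; reflexivity).
    rewrite IH, opp_IZR, vscalNl. apply vopp_unique.
    set (a := vscal _ x); set (c := vcomb V env (tl l)).
    rewrite <- vadd_assoc, (vadd_assoc c), (vadd_comm c (vopp a)), <- vadd_assoc,
      vadd_opp, vadd_zero, vadd_opp.
    reflexivity.
Qed.

Lemma vcomb_nil V env : vcomb V env nil = vzero.
Proof. induction env as [|x env IH]; simpl; auto. rewrite IH, vscal0l, vadd_zero. reflexivity. Qed.

Lemma vcomb_zunit V env : forall n, vcomb V env (zunit n) = nth n env vzero.
Proof.
  induction env as [|x env IH]; intros [|n]; simpl; auto.
  - rewrite vscal_one, vcomb_nil, vadd_zero. reflexivity.
  - rewrite IH, vscal0l, vadd0l. reflexivity.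
Qed.

Lemma veval_vcomb V env t : veval V env t = vcomb V env (vcoeffs t).
Proof.
  induction t; simpl.
  - symmetry; apply vcomb_zunit.
  - symmetry; apply vcomb_nil.
  - rewrite vcomb_zadd, IHt1, IHt2. reflexivity.
  - rewrite vcomb_zopp, IHt. reflexivity.
  - unfold vsub. rewrite vcomb_zadd, vcomb_zopp, IHt1, IHt2. reflexivity.
Qed.

Lemma vcomb_zeros V env : forall l, forallb (Z.eqb 0) l = true -> vcomb V env l = vzero.
Proof.
  induction env as [|x env IH]; intros l Hl; simpl; auto.
  destruct l as [|z l]; simpl.
  - rewrite vcomb_nil, vscal0l, vadd_zero. reflexivity.
  - simpl in Hl. apply andb_prop in Hl as [Hz Hl]. destruct z; try discriminate.
    rewrite IH, vscal0l, vadd_zero; auto.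
Qed.

Lemma veval_eq V env s t : forallb (Z.eqb 0) (vcoeffs (VSub s t)) = true ->
  veval V env s = veval V env t.
Proof.
  intro H. apply vsub_eq0. change (vsub _ _) with (veval V env (VSub s t)).
  rewrite veval_vcomb. apply vcomb_zeros, H.
Qed.

Ltac vfind x l n :=
  match l with
  | nil => constr:(@None nat)
  | cons x _ => constr:(Some n)
  | cons _ ?l' => vfind x l' (S n)
  end.

Ltac vatoms t env :=
  match t with
  | vadd ?a ?b => let e := vatoms a env in vatoms b e
  | vsub ?a ?b => let e := vatoms a env in vatoms b e
  | vopp ?a => vatoms a env
  | vzero => env
  | _ => match vfind t env O with
         | None => eval cbn [app] in (app env (cons t nil))
         | Some _ => env
         end
  end.

Ltac vreify t env :=
  match t with
  | vadd ?a ?b => let ra := vreify a env in let rb := vreify b env in constr:(VAdd ra rb)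
  | vsub ?a ?b => let ra := vreify a env in let rb := vreify b env in constr:(VSub ra rb)
  | vopp ?a => let ra := vreify a env in constr:(VOpp ra)
  | vzero => constr:(VZero)
  | _ => match vfind t env O with Some ?n => constr:(VVar n) end
  end.

Ltac vabel :=
  match goal with
  | |- @eq (vcar ?V) ?l ?r =>
    let e := vatoms l (@nil (vcar V)) in
    let env := vatoms r e in
    let rl := vreify l env in
    let rr := vreify r env in
    change (veval V env rl = veval V env rr);
    apply veval_eq; vm_compute; reflexivity
  end.

Section LinearAlgebra.

Context {V W : VSpace}.

Lemma vscal0r (a : R) : vscal a (@vzero V) = vzero.
Proof. rewrite <- (vscal0l (@vzero V)), vscal_assoc, Rmult_0_r. reflexivity. Qed.

Lemma vscalNr (a : R) (x : V) : vscal a (vopp x) = vopp (vscal a x).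
Proof. apply vopp_unique. rewrite <- vscal_distr_v, vadd_opp. apply vscal0r. Qed.

Lemma vscalBr (a : R) (x y : V) : vscal a (vsub x y) = vsub (vscal a x) (vscal a y).
Proof. unfold vsub. rewrite vscal_distr_v, vscalNr. reflexivity. Qed.

Variable f : V -> W.
Hypothesis f_lin : is_linmap f.

Lemma linD x y : f (vadd x y) = vadd (f x) (f y).
Proof. apply f_lin. Qed.

Lemma linZ a x : f (vscal a x) = vscal a (f x).
Proof. apply f_lin. Qed.

Lemma lin0 : f vzero = vzero.
Proof. rewrite <- (vscal0l vzero), linZ. apply vscal0l. Qed.

Lemma linN x : f (vopp x) = vopp (f x).
Proof. apply vopp_unique. rewrite <- linD, vadd_opp. apply lin0. Qed.

Lemma linB x y : f (vsub x y) = vsub (f x) (f y).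
Proof. unfold vsub. rewrite linD, linN. reflexivity. Qed.

End LinearAlgebra.

Section Norms.

Context {X : NSpace}.

Lemma norm0 : norm (@vzero X) = 0.
Proof. rewrite <- (vscal0l (@vzero X)), norm_scal, Rabs_R0. ring. Qed.

Lemma normN (x : X) : norm (vopp x) = norm x.
Proof. rewrite <- (vscal_one x), <- vscalNl, !norm_scal, Rabs_Ropp. reflexivity. Qed.

Lemma norm_sub_le (x y : X) : norm (vsub x y) <= norm x + norm y.
Proof. unfold vsub. rewrite <- (normN y). apply norm_triangle. Qed.

Lemma trivial_space (Htriv : ~ exists x : X, norm x <> 0) (x : X) : x = vzero.
Proof. apply norm_eq0, NNPP. intro Hx. apply Htriv. exists x. exact Hx. Qed.

End Norms.

Lemma Gspace_bound {G : Group} (X : NSpace) (u : G -> X -> X) :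
  Gspace X u -> exists M, 0 <= M /\ forall g x, norm (u g x) <= M * norm x.
Proof.
  intros (_ & _ & M & HM). exists (Rabs M). split; [apply Rabs_pos|].
  intros g x. eapply Rle_trans; [apply HM|].
  apply Rmult_le_compat_r; [apply norm_nonneg | apply Rle_abs].
Qed.

Section GroupAlgebra.

Context {G : Group}.

Lemma ginv_gmul (g k : G) : ginv (gmul g k) = gmul (ginv k) (ginv g).
Proof.
  assert (H : gmul (gmul g k) (gmul (ginv k) (ginv g)) = gone).
  { rewrite gmul_assoc, <- (gmul_assoc _ g k), gmul_inv_r, gmul_one_r, gmul_inv_r. reflexivity. }
  rewrite <- (gmul_one_r _ (ginv (gmul g k))), <- H, gmul_assoc, gmul_inv_l, gmul_one_l.
  reflexivity.
Qed.

Lemma gmulK (g k : G) : gmul (gmul g k) (ginv k) = g.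
Proof. rewrite <- gmul_assoc, gmul_inv_r, gmul_one_r. reflexivity. Qed.

End GroupAlgebra.

Section Means.

Variables (G : Group) (m : (G -> R) -> R).
Hypothesis m_add : forall f1 f2, bounded_fun f1 -> bounded_fun f2 ->
  m (fun g => f1 g + f2 g) = m f1 + m f2.
Hypothesis m_scal : forall a f, bounded_fun f -> m (fun g => a * f g) = a * m f.
Hypothesis m_pos : forall f, bounded_fun f -> (forall g, 0 <= f g) -> 0 <= m f.
Hypothesis m_one : m (fun _ => 1) = 1.
Hypothesis m_inv : forall f h, bounded_fun f -> m (fun g => f (gmul h g)) = m f.

Lemma bounded_fun_const c : bounded_fun (fun _ : G => c).
Proof. exists (Rabs c). intros _. apply Rle_refl. Qed.

Lemma bounded_fun_add f1 f2 : bounded_fun f1 -> bounded_fun f2 ->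
  bounded_fun (fun g : G => f1 g + f2 g).
Proof.
  intros [M1 H1] [M2 H2]. exists (M1 + M2). intro g.
  eapply Rle_trans; [apply Rabs_triang|]. apply Rplus_le_compat; auto.
Qed.

Lemma bounded_fun_scal a f : bounded_fun f -> bounded_fun (fun g : G => a * f g).
Proof.
  intros [M H]. exists (Rabs a * M). intro g. rewrite Rabs_mult.
  apply Rmult_le_compat_l; [apply Rabs_pos | auto].
Qed.

Lemma mean_const c : m (fun _ => c) = c.
Proof.
  transitivity (m (fun g => c * (fun _ : G => 1) g)).
  - f_equal. extensionality g. ring.
  - rewrite m_scal, m_one by apply bounded_fun_const. ring.
Qed.

Lemma mean_le f1 f2 : bounded_fun f1 -> bounded_fun f2 -> (forall g, f1 g <= f2 g) ->
  m f1 <= m f2.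
Proof.
  intros b1 b2 H.
  assert (Hpos : 0 <= m (fun g => f2 g + -1 * f1 g)).
  { apply m_pos.
    - apply bounded_fun_add, bounded_fun_scal; assumption.
    - intro g. specialize (H g). lra. }
  rewrite m_add, m_scal in Hpos by auto using bounded_fun_scal. lra.
Qed.

Lemma mean_abs_le f B : (forall g, Rabs (f g) <= B) -> Rabs (m f) <= B.
Proof.
  intro H. assert (bf : bounded_fun f) by (exists B; exact H).
  apply Rabs_le. split.
  - rewrite <- (mean_const (- B)) at 1.
    apply mean_le; auto using bounded_fun_const.
    intro g. pose proof (Rle_abs (- f g)) as Hn. rewrite Rabs_Ropp in Hn. specialize (H g). lra.
  - rewrite <- (mean_const B).
    apply mean_le; auto using bounded_fun_const.
    intro g. pose proof (Rle_abs (f g)). specialize (H g). lra.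
Qed.

Section VectorMean.

Variables (X : NSpace) (u : G -> X -> X) (Mu : R).
Hypothesis u_lin : forall g, is_linmap (u g).
Hypothesis Mu_ge0 : 0 <= Mu.
Hypothesis u_bd : forall g x, norm (u g x) <= Mu * norm x.

Variables (P : (Dual X -> R) -> X) (Cp : R).
Hypothesis P_add : forall Phi1 Phi2 Phi3, is_bidual Phi1 -> is_bidual Phi2 -> is_bidual Phi3 ->
  (forall f, Phi3 f = Phi1 f + Phi2 f) -> P Phi3 = vadd (P Phi1) (P Phi2).
Hypothesis P_scal : forall a Phi1 Phi2, is_bidual Phi1 -> is_bidual Phi2 ->
  (forall f, Phi2 f = a * Phi1 f) -> P Phi2 = vscal a (P Phi1).
Hypothesis P_bd : forall Phi K, is_bidual Phi -> bidual_norm_le Phi K -> norm (P Phi) <= Cp * K.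
Hypothesis P_J : forall x : X, P (fun f => proj1_sig f x) = x.
Hypothesis P_u : forall g Phi Phi', is_bidual Phi -> is_bidual Phi' ->
  (forall f f' : Dual X, (forall x, proj1_sig f' x = proj1_sig f (u g x)) -> Phi' f = Phi f') ->
  P Phi' = u g (P Phi).

Definition bounded_family (F : G -> X) : Prop := exists C, 0 <= C /\ forall k, norm (F k) <= C.

Definition weak_mean (F : G -> X) : Dual X -> R := fun f => m (fun k => proj1_sig f (F k)).

(* The G-complementation of X in its bidual is what turns the scalar mean into
   an X-valued, u-equivariant one. *)
Definition vmean (F : G -> X) : X := P (weak_mean F).

Lemma bounded_family_const x : bounded_family (fun _ => x).
Proof. exists (norm x). split; [apply norm_nonneg | intros; apply Rle_refl]. Qed.

Lemma bounded_family_add F1 F2 : bounded_family F1 -> bounded_family F2 ->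
  bounded_family (fun k => vadd (F1 k) (F2 k)).
Proof.
  intros [C1 [HC1 H1]] [C2 [HC2 H2]]. exists (C1 + C2). split; [lra|].
  intro k. eapply Rle_trans; [apply norm_triangle|]. apply Rplus_le_compat; auto.
Qed.

Lemma bounded_family_scal a F : bounded_family F -> bounded_family (fun k => vscal a (F k)).
Proof.
  intros [C [HC H]]. exists (Rabs a * C). split; [apply Rmult_le_pos; auto; apply Rabs_pos|].
  intro k. rewrite norm_scal. apply Rmult_le_compat_l; [apply Rabs_pos | auto].
Qed.

Lemma bounded_family_u g F : bounded_family F -> bounded_family (fun k => u g (F k)).
Proof.
  intros [C [HC H]]. exists (Mu * C). split; [apply Rmult_le_pos; auto|].
  intro k. eapply Rle_trans; [apply u_bd|]. apply Rmult_le_compat_l; auto.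
Qed.

Lemma dual0 (f : Dual X) : proj1_sig f vzero = 0.
Proof.
  destruct (proj2_sig f) as [[_ Hscal] _].
  rewrite <- (vscal0l vzero), Hscal. ring.
Qed.

Lemma dual_bounded_fun (f : Dual X) F : bounded_family F ->
  bounded_fun (fun k => proj1_sig f (F k)).
Proof.
  intros [C [HC HF]]. destruct (proj2_sig f) as [_ [M HM]].
  exists (Rabs M * C). intro k. eapply Rle_trans; [apply HM|].
  apply Rle_trans with (Rabs M * norm (F k)).
  - apply Rmult_le_compat_r; [apply norm_nonneg | apply Rle_abs].
  - apply Rmult_le_compat_l; [apply Rabs_pos | apply HF].
Qed.

Lemma fbounded_nonneg (f : X -> R) M : (exists x : X, norm x <> 0) -> fbounded f M -> 0 <= M.
Proof.
  intros [x Hx] Hf. specialize (Hf x). pose proof (Rabs_pos (f x)).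
  pose proof (norm_nonneg x). destruct (Rle_dec 0 M); [assumption|].
  assert (0 < norm x) by lra. nra.
Qed.

Lemma weak_mean_norm_le F C : (exists x : X, norm x <> 0) -> (forall k, norm (F k) <= C) ->
  bidual_norm_le (weak_mean F) C.
Proof.
  intros Hnt HF f M Hf. pose proof (fbounded_nonneg _ _ Hnt Hf).
  rewrite Rmult_comm. apply mean_abs_le. intro k.
  eapply Rle_trans; [apply Hf|]. apply Rmult_le_compat_l; auto.
Qed.

Lemma weak_mean_bidual F : bounded_family F -> is_bidual (weak_mean F).
Proof.
  intro hF. split; [|split].
  - intros f1 f2 f3 H. unfold weak_mean. rewrite <- m_add by (apply dual_bounded_fun; auto).
    f_equal. extensionality k. apply H.
  - intros a f1 f2 H. unfold weak_mean. rewrite <- m_scal by (apply dual_bounded_fun; auto).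
    f_equal. extensionality k. apply H.
  - destruct (classic (exists x : X, norm x <> 0)) as [Hnt|Htriv].
    + destruct hF as [C [_ HF]]. exists C. apply weak_mean_norm_le; auto.
    + exists 0. intros f M _. unfold weak_mean.
      replace (fun k => proj1_sig f (F k)) with (fun _ : G => 0).
      * rewrite mean_const, Rabs_R0. lra.
      * extensionality k. rewrite (trivial_space Htriv (F k)). symmetry; apply dual0.
Qed.

Lemma vmean_norm_le F C : 0 <= C -> (forall k, norm (F k) <= C) -> norm (vmean F) <= Rabs Cp * C.
Proof.
  intros HC HF. destruct (classic (exists x : X, norm x <> 0)) as [Hnt|Htriv].
  - apply Rle_trans with (Cp * C).
    + apply P_bd; [apply weak_mean_bidual; exists C; auto | apply weak_mean_norm_le; auto].
    + apply Rmult_le_compat_r; [assumption | apply Rle_abs].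
  - rewrite (trivial_space Htriv (vmean F)), norm0.
    apply Rmult_le_pos; [apply Rabs_pos | assumption].
Qed.

Lemma vmean_add F1 F2 : bounded_family F1 -> bounded_family F2 ->
  vmean (fun k => vadd (F1 k) (F2 k)) = vadd (vmean F1) (vmean F2).
Proof.
  intros h1 h2. apply P_add; auto using weak_mean_bidual, bounded_family_add.
  intro f. unfold weak_mean. rewrite <- m_add by (apply dual_bounded_fun; auto).
  f_equal. extensionality k. apply (proj1 (proj1 (proj2_sig f))).
Qed.

Lemma vmean_scal a F : bounded_family F -> vmean (fun k => vscal a (F k)) = vscal a (vmean F).
Proof.
  intro h. apply P_scal; auto using weak_mean_bidual, bounded_family_scal.
  intro f. unfold weak_mean. rewrite <- m_scal by (apply dual_bounded_fun; auto).
  f_equal. extensionality k. apply (proj2 (proj1 (proj2_sig f))).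
Qed.

Lemma vmean_const x : vmean (fun _ => x) = x.
Proof.
  transitivity (P (fun f => proj1_sig f x)); [|apply P_J].
  unfold vmean. f_equal. extensionality f. unfold weak_mean. apply mean_const.
Qed.

Lemma vmean_u g F : bounded_family F -> vmean (fun k => u g (F k)) = u g (vmean F).
Proof.
  intro h. apply P_u; auto using weak_mean_bidual, bounded_family_u.
  intros f f' Hf. unfold weak_mean. f_equal. extensionality k. symmetry; apply Hf.
Qed.

Lemma vmean_shift h F : bounded_family F -> vmean (fun k => F (gmul h k)) = vmean F.
Proof.
  intro hF. unfold vmean. f_equal. extensionality f. unfold weak_mean.
  apply (m_inv (fun k => proj1_sig f (F k))). apply dual_bounded_fun; auto.
Qed.

Section Construction.

Hypothesis u_mul : forall g h x, u (gmul g h) x = u g (u h x).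

Variables (Y : NSpace) (v : G -> Y -> Y) (Mv : R).
Hypothesis v_lin : forall g, is_linmap (v g).
Hypothesis v_mul : forall g h y, v (gmul g h) y = v g (v h y).
Hypothesis v_one : forall y, v gone y = y.
Hypothesis Mv_ge0 : 0 <= Mv.
Hypothesis v_bd : forall g y, norm (v g y) <= Mv * norm y.

Variable Y00 : Y -> Prop.
Hypothesis Y00_0 : Y00 vzero.
Hypothesis Y00_add : forall x y, Y00 x -> Y00 y -> Y00 (vadd x y).
Hypothesis Y00_scal : forall a x, Y00 x -> Y00 (vscal a x).
Hypothesis Y00_v : forall g y, Y00 y -> Y00 (v g y).

Variables (Xinf : VSpace) (iota : X -> Xinf) (uinf : G -> Xinf -> Xinf).
Hypothesis iota_lin : is_linmap iota.
Hypothesis iota_inj : forall x1 x2, iota x1 = iota x2 -> x1 = x2.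
Hypothesis uinf_lin : forall g, is_linmap (uinf g).
Hypothesis uinf_mul : forall g h x, uinf (gmul g h) x = uinf g (uinf h x).
Hypothesis uinf_one : forall x, uinf gone x = x.
Hypothesis uinf_iota : forall g x, uinf g (iota x) = iota (u g x).

Variables (Omega : Y -> Xinf) (L : G -> Y -> Xinf) (K : R).
Hypothesis Omega_hom : forall a y, Y00 y -> Omega (vscal a y) = vscal a (Omega y).
Hypothesis L_lin : forall g, is_linmap_on Y00 (L g).
Hypothesis T_bd : forall g, exists a b, 0 <= a /\ 0 <= b /\ a * b <= K /\
  twisted_bdd_invertible Y00 iota Omega uinf v g (L g) a b.

Lemma Omega0 : Omega vzero = vzero.
Proof. pose proof (Omega_hom 0 vzero Y00_0) as H. rewrite !vscal0l in H. exact H. Qed.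

Lemma L0 g : L g vzero = vzero.
Proof.
  destruct (L_lin g) as [_ HZ].
  rewrite <- (vscal0l (@vzero Y)), HZ by exact Y00_0. apply vscal0l.
Qed.

Lemma K_ge0 : 0 <= K.
Proof. destruct (T_bd gone) as (a & b & Ha & Hb & Hab & _). nra. Qed.

Lemma KMu_ge0 : 0 <= K * Mu.
Proof. apply Rmult_le_pos; [apply K_ge0 | exact Mu_ge0]. Qed.

Lemma CpKMu_ge0 : 0 <= Rabs Cp * Mu * (K * Mu).
Proof.
  apply Rmult_le_pos; [apply Rmult_le_pos; [apply Rabs_pos | exact Mu_ge0] | apply KMu_ge0].
Qed.

Lemma twisted_maps_inD g a b z y : twisted_bdd_invertible Y00 iota Omega uinf v g (L g) a b ->
  inD Y00 iota Omega z y -> inD Y00 iota Omega (vadd (uinf g z) (L g y)) (v g y).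
Proof. intros [HD _]. apply HD. Qed.

Lemma twisted_qnorm_le g a b z y q q' :
  twisted_bdd_invertible Y00 iota Omega uinf v g (L g) a b ->
  qnorm_is Y00 iota Omega z y q ->
  qnorm_is Y00 iota Omega (vadd (uinf g z) (L g y)) (v g y) q' -> q' <= a * q /\ q <= b * q'.
Proof. intros [_ [Hq _]]. apply Hq. Qed.

Lemma qnorm_graph w : Y00 w -> qnorm_is Y00 iota Omega (Omega w) w (norm w).
Proof.
  intro Hw. split; [exact Hw|]. exists vzero. split.
  - rewrite (lin0 iota iota_lin). vabel.
  - rewrite norm0. ring.
Qed.

Lemma qnorm_X x : qnorm_is Y00 iota Omega (iota x) vzero (norm x).
Proof.
  split; [exact Y00_0|]. exists x. split.
  - rewrite Omega0. vabel.
  - rewrite norm0. ring.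
Qed.

(* [beta g w] is the [X]-component of [T_g (Omega w, w) - (Omega (v g w), v g w)]
   (an unspecified junk value when [~ Y00 w]). *)
Definition beta (g : G) (w : Y) : X :=
  epsilon (inhabits vzero)
    (fun x => iota x = vsub (vadd (uinf g (Omega w)) (L g w)) (Omega (v g w))).

Lemma beta_spec g w : Y00 w ->
  iota (beta g w) = vsub (vadd (uinf g (Omega w)) (L g w)) (Omega (v g w)).
Proof.
  intro Hw. destruct (T_bd g) as (a & b & _ & _ & _ & HT).
  assert (HD : inD Y00 iota Omega (Omega w) w).
  { destruct (qnorm_graph w Hw) as [_ [x [Hx _]]]. split; [exact Hw | exists x; exact Hx]. }
  destruct (twisted_maps_inD g a b _ _ HT HD) as [_ Hx].
  exact (epsilon_spec (inhabits vzero) _ Hx).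
Qed.

Lemma beta_norm_le_Tnorm g a b w : twisted_bdd_invertible Y00 iota Omega uinf v g (L g) a b ->
  Y00 w -> norm (beta g w) <= a * norm w.
Proof.
  intros HT Hw.
  assert (Hq : qnorm_is Y00 iota Omega (vadd (uinf g (Omega w)) (L g w)) (v g w)
                 (norm (beta g w) + norm (v g w))).
  { split; [apply Y00_v, Hw|]. exists (beta g w). split; [apply beta_spec, Hw | reflexivity]. }
  destruct (twisted_qnorm_le g a b _ _ _ _ HT (qnorm_graph w Hw) Hq) as [H _].
  pose proof (norm_nonneg (v g w)). lra.
Qed.

Lemma twisted_inv_norm_ge g a b : twisted_bdd_invertible Y00 iota Omega uinf v g (L g) a b ->
  0 <= b -> (exists x : X, norm x <> 0) -> 1 <= b * Mu.
Proof.
  intros HT Hb [x Hx].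
  assert (Hq : qnorm_is Y00 iota Omega (vadd (uinf g (iota x)) (L g vzero)) (v g vzero)
                 (norm (u g x))).
  { split; [apply Y00_v, Y00_0|]. exists (u g x).
    rewrite (lin0 (v g) (v_lin g)), L0, Omega0, uinf_iota, norm0. split; [vabel | ring]. }
  destruct (twisted_qnorm_le g a b _ _ _ _ HT (qnorm_X x) Hq) as [_ H].
  assert (Hx0 : 0 < norm x) by (pose proof (norm_nonneg x); lra).
  assert (b * norm (u g x) <= b * (Mu * norm x)) by (apply Rmult_le_compat_l; auto).
  apply Rmult_le_reg_r with (norm x); [exact Hx0|]. lra.
Qed.

Lemma beta_norm_le g w : Y00 w -> norm (beta g w) <= K * Mu * norm w.
Proof.
  intro Hw. destruct (T_bd g) as (a & b & Ha & Hb & Hab & HT).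
  pose proof (norm_nonneg w).
  destruct (classic (exists x : X, norm x <> 0)) as [Hnt|Htriv].
  - pose proof (twisted_inv_norm_ge g a b HT Hb Hnt).
    pose proof (beta_norm_le_Tnorm g a b w HT Hw).
    assert (a <= K * Mu) by (pose proof K_ge0; nra).
    assert (a * norm w <= K * Mu * norm w) by (apply Rmult_le_compat_r; auto).
    lra.
  - rewrite (trivial_space Htriv (beta g w)), norm0. apply Rmult_le_pos; auto using KMu_ge0.
Qed.

(* [beta] is not linear, but its cocycle defect is: it is that of [L]. *)
Definition beta_defect (a b : G) (w : Y) : X :=
  vsub (vsub (beta (gmul a b) w) (u a (beta b w))) (beta a (v b w)).

Lemma iota_beta_defect a b w : Y00 w ->
  iota (beta_defect a b w) = vsub (vsub (L (gmul a b) w) (uinf a (L b w))) (L a (v b w)).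
Proof.
  intro Hw. unfold beta_defect. rewrite !(linB iota iota_lin), <- uinf_iota.
  rewrite !beta_spec by auto.
  rewrite (linB (uinf a) (uinf_lin a)), (linD (uinf a) (uinf_lin a)), <- uinf_mul, <- v_mul.
  vabel.
Qed.

Lemma beta_defectD a b w1 w2 : Y00 w1 -> Y00 w2 ->
  beta_defect a b (vadd w1 w2) = vadd (beta_defect a b w1) (beta_defect a b w2).
Proof.
  intros H1 H2. apply iota_inj.
  rewrite (linD iota iota_lin), !iota_beta_defect, (linD (v b) (v_lin b)) by auto.
  rewrite !(proj1 (L_lin _)), (linD (uinf a) (uinf_lin a)) by auto.
  vabel.
Qed.

Lemma beta_defectZ a b c w : Y00 w -> beta_defect a b (vscal c w) = vscal c (beta_defect a b w).
Proof.
  intro Hw. apply iota_inj.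
  rewrite (linZ iota iota_lin), !iota_beta_defect, (linZ (v b) (v_lin b)) by auto.
  rewrite !(proj2 (L_lin _)), (linZ (uinf a) (uinf_lin a)), !vscalBr by auto.
  reflexivity.
Qed.

Lemma beta_defect_norm_le a b w : Y00 w ->
  norm (beta_defect a b w) <= K * Mu * (1 + Mu + Mv) * norm w.
Proof.
  intro Hw. unfold beta_defect.
  pose proof (beta_norm_le (gmul a b) w Hw) as H1.
  assert (H2 : norm (u a (beta b w)) <= Mu * (K * Mu * norm w)).
  { eapply Rle_trans; [apply u_bd|]. apply Rmult_le_compat_l; auto using beta_norm_le. }
  assert (H3 : norm (beta a (v b w)) <= K * Mu * (Mv * norm w)).
  { eapply Rle_trans; [apply beta_norm_le; auto|].
    apply Rmult_le_compat_l; [apply KMu_ge0 | apply v_bd]. }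
  pose proof (norm_sub_le (vsub (beta (gmul a b) w) (u a (beta b w))) (beta a (v b w))).
  pose proof (norm_sub_le (beta (gmul a b) w) (u a (beta b w))).
  replace (K * Mu * (1 + Mu + Mv) * norm w)
    with (K * Mu * norm w + Mu * (K * Mu * norm w) + K * Mu * (Mv * norm w)) by ring.
  lra.
Qed.

Definition beta_avg (w : Y) : X := vmean (fun k => u k (beta (ginv k) w)).

Lemma u_beta_norm_le k w : Y00 w -> norm (u k (beta (ginv k) w)) <= Mu * (K * Mu * norm w).
Proof.
  intro Hw. eapply Rle_trans; [apply u_bd|]. apply Rmult_le_compat_l; auto using beta_norm_le.
Qed.

Lemma u_beta_bound_ge0 (w : Y) : 0 <= Mu * (K * Mu * norm w).
Proof.
  apply Rmult_le_pos; [exact Mu_ge0 | apply Rmult_le_pos; [apply KMu_ge0 | apply norm_nonneg]].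
Qed.

Lemma beta_avg_family w : Y00 w -> bounded_family (fun k => u k (beta (ginv k) w)).
Proof.
  intro Hw. exists (Mu * (K * Mu * norm w)).
  split; [apply u_beta_bound_ge0 | intro k; apply u_beta_norm_le, Hw].
Qed.

Lemma beta_avg_norm_le w : Y00 w -> norm (beta_avg w) <= Rabs Cp * Mu * (K * Mu) * norm w.
Proof.
  intro Hw. apply Rle_trans with (Rabs Cp * (Mu * (K * Mu * norm w))).
  - apply vmean_norm_le; [apply u_beta_bound_ge0 | intro k; apply u_beta_norm_le, Hw].
  - right. ring.
Qed.

Definition defect_avg (g : G) (y : Y) : X :=
  vmean (fun k => u (gmul g k) (beta_defect (ginv k) (ginv g) (v g y))).

Lemma defect_avg_family g y : Y00 y ->
  bounded_family (fun k => u (gmul g k) (beta_defect (ginv k) (ginv g) (v g y))).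
Proof.
  intro Hy. exists (Mu * (K * Mu * (1 + Mu + Mv) * norm (v g y))). split.
  - apply Rmult_le_pos; [exact Mu_ge0|].
    apply Rmult_le_pos; [apply Rmult_le_pos; [apply KMu_ge0 | lra] | apply norm_nonneg].
  - intro k. eapply Rle_trans; [apply u_bd|].
    apply Rmult_le_compat_l; auto using beta_defect_norm_le.
Qed.

Lemma beta_avg_v g y : Y00 y ->
  beta_avg (v g y) = vadd (vadd (defect_avg g y) (u g (beta (ginv g) (v g y)))) (u g (beta_avg y)).
Proof.
  intro Hy. unfold beta_avg at 1.
  rewrite <- (vmean_shift g) by (apply beta_avg_family; auto).
  transitivity (vmean (fun k =>
    vadd (vadd (u (gmul g k) (beta_defect (ginv k) (ginv g) (v g y))) (u g (beta (ginv g) (v g y))))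
         (u g (u k (beta (ginv k) y))))).
  - f_equal. extensionality k.
    assert (Hdefect : beta (gmul (ginv k) (ginv g)) (v g y) =
      vadd (vadd (beta_defect (ginv k) (ginv g) (v g y)) (u (ginv k) (beta (ginv g) (v g y))))
           (beta (ginv k) (v (ginv g) (v g y)))) by (unfold beta_defect; vabel).
    rewrite ginv_gmul, Hdefect, <- v_mul, gmul_inv_l, v_one, !(linD (u (gmul g k)) (u_lin _)),
      <- u_mul, gmulK, !u_mul.
    reflexivity.
  - rewrite !vmean_add, vmean_const, vmean_u;
      auto using defect_avg_family, beta_avg_family, bounded_family_add, bounded_family_const,
        bounded_family_u.
Qed.

Lemma defect_avgD g y1 y2 : Y00 y1 -> Y00 y2 ->
  defect_avg g (vadd y1 y2) = vadd (defect_avg g y1) (defect_avg g y2).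
Proof.
  intros H1 H2. unfold defect_avg. rewrite <- vmean_add by (apply defect_avg_family; auto).
  f_equal. extensionality k.
  rewrite (linD (v g) (v_lin g)), beta_defectD by auto. apply linD, u_lin.
Qed.

Lemma defect_avgZ g c y : Y00 y -> defect_avg g (vscal c y) = vscal c (defect_avg g y).
Proof.
  intro Hy. unfold defect_avg. rewrite <- vmean_scal by (apply defect_avg_family; auto).
  f_equal. extensionality k.
  rewrite (linZ (v g) (v_lin g)), beta_defectZ by auto. apply linZ, u_lin.
Qed.

Definition Omega_avg (y : Y) : Xinf := vsub (Omega y) (iota (beta_avg y)).

Definition coboundary (g : G) (y : Y) : Xinf :=
  vsub (Omega_avg (v g y)) (uinf g (Omega_avg y)).

Lemma coboundary_eq g y : Y00 y ->
  coboundary g y = vopp (vadd (uinf g (L (ginv g) (v g y))) (iota (defect_avg g y))).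
Proof.
  intro Hy. unfold coboundary, Omega_avg. rewrite beta_avg_v by auto.
  rewrite (linB (uinf g) (uinf_lin g)), uinf_iota, !(linD iota iota_lin).
  rewrite <- (uinf_iota g (beta (ginv g) (v g y))), beta_spec by auto.
  rewrite (linB (uinf g) (uinf_lin g)), (linD (uinf g) (uinf_lin g)), <- (uinf_mul g (ginv g)),
    gmul_inv_r, uinf_one, <- (v_mul (ginv g) g), gmul_inv_l, v_one.
  vabel.
Qed.

Lemma coboundary_lin g : is_linmap_on Y00 (coboundary g).
Proof.
  split.
  - intros y1 y2 H1 H2. rewrite !coboundary_eq by auto.
    rewrite (linD (v g) (v_lin g)), (proj1 (L_lin _)), (linD (uinf g) (uinf_lin g)), defect_avgD,
      (linD iota iota_lin) by auto.
    vabel.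
  - intros c y Hy. rewrite !coboundary_eq by auto.
    rewrite (linZ (v g) (v_lin g)), (proj2 (L_lin _)), (linZ (uinf g) (uinf_lin g)), defect_avgZ,
      (linZ iota iota_lin), vscalNr, vscal_distr_v by auto.
    reflexivity.
Qed.

Lemma coboundary_mul g h y :
  coboundary (gmul g h) y = vadd (uinf g (coboundary h y)) (coboundary g (v h y)).
Proof. unfold coboundary. rewrite v_mul, uinf_mul, (linB (uinf g) (uinf_lin g)). vabel. Qed.

Lemma coboundary_compat g y : vadd (vsub (uinf g (Omega y)) (Omega (v g y))) (coboundary g y) =
  iota (vsub (u g (beta_avg y)) (beta_avg (v g y))).
Proof.
  unfold coboundary, Omega_avg.
  rewrite (linB (uinf g) (uinf_lin g)), uinf_iota, (linB iota iota_lin).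
  vabel.
Qed.

Lemma coboundary_sub_L g y : Y00 y -> vsub (coboundary g y) (L g y) =
  iota (vsub (vsub (u g (beta_avg y)) (beta_avg (v g y))) (beta g y)).
Proof.
  intro Hy. unfold coboundary, Omega_avg.
  rewrite (linB (uinf g) (uinf_lin g)), uinf_iota, !(linB iota iota_lin), beta_spec by auto.
  vabel.
Qed.

Lemma beta_avg_coboundary_norm_le g y : Y00 y ->
  norm (vsub (u g (beta_avg y)) (beta_avg (v g y)))
    <= (Mu + Mv) * (Rabs Cp * Mu * (K * Mu)) * norm y.
Proof.
  intro Hy. set (C := Rabs Cp * Mu * (K * Mu)).
  assert (H1 : norm (u g (beta_avg y)) <= Mu * (C * norm y)).
  { eapply Rle_trans; [apply u_bd|]. apply Rmult_le_compat_l; auto using beta_avg_norm_le. }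
  assert (H2 : norm (beta_avg (v g y)) <= C * (Mv * norm y)).
  { eapply Rle_trans; [apply beta_avg_norm_le; auto|].
    apply Rmult_le_compat_l; [apply CpKMu_ge0 | apply v_bd]. }
  pose proof (norm_sub_le (u g (beta_avg y)) (beta_avg (v g y))).
  replace ((Mu + Mv) * C * norm y) with (Mu * (C * norm y) + C * (Mv * norm y)) by ring.
  lra.
Qed.

Lemma compatible_derivation_near_L : exists d : G -> Y -> Xinf,
  compatible_via Y00 iota Omega uinf v d /\
  (forall g y, Y00 y -> inX iota (vsub (d g y) (L g y))) /\
  (exists C, forall g y, Y00 y -> norm y <= 1 -> inX_le iota (vsub (d g y) (L g y)) C).
Proof.
  set (C := (Mu + Mv) * (Rabs Cp * Mu * (K * Mu))).
  assert (HC : 0 <= C) by (apply Rmult_le_pos; [lra | apply CpKMu_ge0]).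
  exists coboundary. split; [|split].
  - split; [split; [apply coboundary_lin | intros; apply coboundary_mul]|].
    exists C. intros g y Hy. eexists. split; [symmetry; apply coboundary_compat|].
    apply beta_avg_coboundary_norm_le, Hy.
  - intros g y Hy. eexists. symmetry. apply coboundary_sub_L, Hy.
  - exists (C + K * Mu). intros g y Hy Hy1.
    eexists. split; [symmetry; apply coboundary_sub_L, Hy|].
    pose proof (beta_avg_coboundary_norm_le g y Hy). pose proof (beta_norm_le g y Hy).
    assert (C * norm y <= C * 1) by (apply Rmult_le_compat_l; auto).
    assert (K * Mu * norm y <= K * Mu * 1) by (apply Rmult_le_compat_l; auto using KMu_ge0).
    pose proof (norm_sub_le (vsub (u g (beta_avg y)) (beta_avg (v g y))) (beta g y)).
    unfold C in *. lra.
Qed.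

End Construction.
End VectorMean.
End Means.

Theorem mainTheorem14
  (G : Group) (X Y : NSpace) (u : G -> X -> X) (v : G -> Y -> Y)
  (Y00 : Y -> Prop) (Xinf : VSpace) (iota : X -> Xinf) (uinf : G -> Xinf -> Xinf)
  (Omega : Y -> Xinf) (L : G -> Y -> Xinf)
  (hG : amenable G)
  (hX : Gspace X u) (hY : Gspace Y v)
  (hXc : G_complemented_in_bidual X u)
  (hset : QL_setting X Y u v Y00 Xinf iota uinf)
  (hOmega : quasi_linear Y00 iota Omega)
  (hLlin : forall g, is_linmap_on Y00 (L g))
  (hT : exists K, forall g, exists a b, 0 <= a /\ 0 <= b /\ a * b <= K /\
          twisted_bdd_invertible Y00 iota Omega uinf v g (L g) a b) :
  exists d : G -> Y -> Xinf,
    compatible_via Y00 iota Omega uinf v d /\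
    (forall g y, Y00 y -> inX iota (vsub (d g y) (L g y))) /\
    (exists C, forall g y, Y00 y -> norm y <= 1 -> inX_le iota (vsub (d g y) (L g y)) C).
Proof.
  destruct hG as [m (m_add & m_scal & m_pos & m_one & m_inv)].
  destruct (Gspace_bound X u hX) as (Mu & Mu_ge0 & u_bd).
  destruct (Gspace_bound Y v hY) as (Mv & Mv_ge0 & v_bd).
  destruct hX as (_ & (u_lin & u_mul & _) & _).
  destruct hY as (_ & (v_lin & v_mul & v_one) & _).
  destruct hXc as (P & P_add & P_scal & (Cp & P_bd) & P_J & P_u).
  destruct hset as ((Y00_0 & Y00_add & Y00_scal) & _ & Y00_v & iota_lin & iota_inj &
                    (uinf_lin & uinf_mul & uinf_one) & uinf_iota).
  destruct hOmega as (Omega_hom & _).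
  destruct hT as (K & T_bd).
  exact (compatible_derivation_near_L G m m_add m_scal m_pos m_one m_inv X u Mu u_lin Mu_ge0 u_bd
    P Cp P_add P_scal P_bd P_J P_u u_mul Y v Mv v_lin v_mul v_one Mv_ge0 v_bd
    Y00 Y00_0 Y00_add Y00_scal Y00_v Xinf iota uinf iota_lin iota_inj uinf_lin uinf_mul uinf_one
    uinf_iota Omega L K Omega_hom hLlin T_bd).
Qed.
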